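(* Let $k\ge 4$ be an integer. For every tree $T$ of order $n\ge k$, $W_{tsp,k}(T)=2W_k(T)$. If $G$ is a finite simple connected graph of order $n\ge k$ that is not a tree, then $W_{tsp,k}(G)<2W_k(G)$.
   Context: For a set $S$ of $k$ vertices of a connected graph $G$, $\mathrm{tsp}_k(S)$ is the length (number of edge traversals, with multiplicity) of a shortest closed walk in $G$ visiting all vertices of $S$, and $W_{tsp,k}(G)=\sum_{S\subseteq V,\,|S|=k}\mathrm{tsp}_k(S)$. The Steiner distance $d_k(S)$ is the minimum number of edges of a connected subgraph (a subtree) of $G$ containing $S$, and $W_k(G)=\sum_{S\subseteq V,\,|S|=k}d_k(S)$. *)

From mathcomp Require Import all_boot.
From Stdlib Require Import ClassicalEpsilon.
Set Implicit Arguments. Unset Strict Implicit. Unset Printing Implicit Defensive.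

Section Graphs.
Variables (T : finType) (e : rel T).

Definition simple_graph := symmetric e /\ irreflexive e.

Definition connected_graph := forall x y : T, connect e x y.

Definition acyclic_graph :=
  ~ exists c : seq T, [&& uniq c, 2 < size c & cycle e c].

Definition is_tree := connected_graph /\ acyclic_graph.

Definition closed_walk_len (S : {set T}) (m : nat) : bool :=
  [exists x : T, exists t : m.-tuple T,
     [&& path e x t, last x t == x & S \subset (x :: tval t)]].

Definition connected_subgraph_size (S : {set T}) (m : nat) : bool :=
  [exists A : {set T}, exists F : {set {set T}},
     [&& #|F| == m,
         [forall f in F, exists u, exists v,
             [&& e u v, u \in A, v \in A & f == [set u; v]]],
         S \subset A &
         [forall x in A, forall y in A,
             connect (fun u v => [set u; v] \in F) x y]]].

Definition least_nat (P : nat -> bool) : nat :=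
  match excluded_middle_informative (exists m, P m) with
  | left h => ex_minn h
  | right _ => 0
  end.

Definition tsp (S : {set T}) : nat := least_nat (closed_walk_len S).

Definition steiner (S : {set T}) : nat := least_nat (connected_subgraph_size S).

Definition W_tsp (k : nat) : nat := \sum_(S : {set T} | #|S| == k) tsp S.
Definition W_steiner (k : nat) : nat := \sum_(S : {set T} | #|S| == k) steiner S.

End Graphs.

From mathcomp Require Import all_boot zify.
From Stdlib Require Import ClassicalEpsilon.
Set Implicit Arguments. Unset Strict Implicit. Unset Printing Implicit Defensive.

(* In a connected graph, walking around a spanning tree of a Steiner subgraph
   for S gives a closed walk through S of length at most 2 d(S); conversely the
   edges traversed by a closed walk through S form a connected subgraph, so
   d(S) is at most their number.  In a closed walk shorter than every cycle
   each traversed edge is traversed at least twice: an edge used once could be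
   dropped, and the remaining walk between its ends, shortened to a path,
   would close a cycle with it.  Hence tsp(S) = 2 d(S) in a tree.

   If G has cycles, let C be a shortest one, of length g.  When g <= k, extend
   V(C) to a k-set S by detours u -> v -> u; then tsp(S) <= 2k - g < 2(k - 1)
   <= 2 d(S).  When g > k, cut C into four arcs shorter than g/2 and let S be a
   k-set of vertices of C containing the four cut points.  If 2 d(S) <= g,
   each arc closed up by a path of the Steiner subgraph would be a closed walk
   shorter than g, so every edge of C would lie in that subgraph and
   d(S) >= g, a contradiction; thus tsp(S) <= g < 2 d(S). *)

Lemma least_nat_le (P : pred nat) m : P m -> least_nat P <= m.
Proof.
move=> Pm; rewrite /least_nat; case: excluded_middle_informative => [h|[]]; last by exists m.
by case: ex_minnP => n _ /(_ m Pm).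
Qed.

Lemma least_natP (P : pred nat) : (exists m, P m) -> P (least_nat P).
Proof.
by move=> h; rewrite /least_nat; case: excluded_middle_informative => [h'|//]; case: ex_minnP.
Qed.

Lemma double_card_le_size (U : finType) (s : seq U) :
  (forall y, y \in s -> 1 < count_mem y s) -> 2 * #|[set:: s]| <= size s.
Proof.
move=> s2.
have -> : #|[set:: s]| = size (undup s).
  by rewrite cardsE -(eq_card (mem_undup s)); apply/card_uniqP; exact: undup_uniq.
have -> : size s = sumn [seq count_mem y s | y <- undup s].
  rewrite -(perm_size (perm_count_undup s)) size_flatten /shape -map_comp.
  by congr sumn; apply: eq_map => y /=; rewrite size_nseq.
have : {subset undup s <= s} by move=> y; rewrite mem_undup.
elim: (undup s) => [|y l IH] //= sub.
rewrite mulnS leq_add ?IH //; first by apply: s2; apply: sub; exact: mem_head.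
by move=> z zl; apply: sub; rewrite inE zl orbT.
Qed.

Lemma subset_card_between (U : finType) (A C : {set U}) n :
  A \subset C -> #|A| <= n <= #|C| -> exists B : {set U}, [/\ A \subset B, B \subset C & #|B| = n].
Proof.
move=> AC; elim: n => [|n IH]; first by rewrite leqn0 => /andP[/eqP A0 _]; exists A.
rewrite leq_eqVlt => /andP[/orP[/eqP <-|An] nC]; first by exists A.
have [B [AB BC cB]] : exists B : {set U}, [/\ A \subset B, B \subset C & #|B| = n].
  by apply: IH; rewrite -ltnS An ltnW.
have [y yC yB] : exists2 y, y \in C & y \notin B.
  by apply/subsetPn; apply: contraTN nC => /subset_leq_card; rewrite cB -leqNgt.
exists (y |: B); split; last by rewrite cardsU1 yB cB.
- exact: subset_trans AB (subsetUr _ _).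
- by rewrite subUset sub1set yC.
Qed.

Lemma connect_exit (U : finType) (r : rel U) (B : {set U}) x y :
  connect r x y -> x \in B -> y \notin B -> exists u v, [/\ u \in B, v \notin B & r u v].
Proof.
case/connectP => p; elim: p x => [|z p IH] x /=; first by move=> _ -> ->.
case/andP=> rxz pz ly xB yB.
case zB: (z \in B); first exact: IH pz ly zB yB.
by exists x, z; rewrite zB.
Qed.

Lemma path_targets_all (U : eqType) (r : rel U) (a : pred U) x t :
  (forall u v, r u v -> a v) -> path r x t -> all a t.
Proof. by move=> ra; elim: t x => [|y t IH] x //= /andP[/ra -> /IH]. Qed.

Lemma split_short_halves (U : Type) (t : seq U) : 1 < size t ->
  exists a s b s', [/\ t = a :: s ++ b :: s', 2 * size s < size t & 2 * size s' < size t].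
Proof.
move=> t2; have hg := odd_double_half (size t); rewrite -addnn in hg.
have := cat_take_drop (size t)./2 t.
have : size (take (size t)./2 t) = (size t)./2 by rewrite size_takel //; lia.
have : size (drop (size t)./2 t) = size t - (size t)./2 by rewrite size_drop.
case: (take _ _) => [|a s]; case: (drop _ _) => [|b s'] /=; try lia.
by move=> hs' hs dt; exists a, s, b, s'; split; [rewrite -dt | lia | lia].
Qed.

Section Walks.
Variable T : finType.
Implicit Types (x y : T) (t : seq T) (F : {set {set T}}).

Fixpoint walk_edges x t : seq {set T} :=
  if t is y :: t' then [set x; y] :: walk_edges y t' else [::].

Definition edge_rel F : rel T := fun a b => [set a; b] \in F.

Lemma edge_rel_sym F : symmetric (edge_rel F).
Proof. by move=> a b; rewrite /edge_rel setUC. Qed.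

Lemma walk_edges_cat x t1 t2 :
  walk_edges x (t1 ++ t2) = walk_edges x t1 ++ walk_edges (last x t1) t2.
Proof. by elim: t1 x => [|y t1 IH] x //=; rewrite IH. Qed.

Lemma size_walk_edges x t : size (walk_edges x t) = size t.
Proof. by elim: t x => [|y t IH] x //=; rewrite IH. Qed.

Lemma walk_edgesP x t f : f \in walk_edges x t ->
  exists t1 v t2, t = t1 ++ v :: t2 /\ f = [set last x t1; v].
Proof.
elim: t x => [|y t IH] x //=; rewrite inE => /predU1P[->|/IH [t1 [v [t2 [-> ->]]]]].
  by exists [::], y, t.
by exists (y :: t1), v, t2.
Qed.

Lemma walk_edge_rel (r : rel T) x t f : path r x t -> f \in walk_edges x t ->
  exists u v, [/\ r u v, u \in x :: t, v \in x :: t & f = [set u; v]].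
Proof.
elim: t x => [|y t IH] x //= /andP[rxy pt]; rewrite inE => /predU1P[->|].
  by exists x, y; rewrite rxy !mem_head in_cons mem_head orbT.
case/(IH _ pt) => u [v [ruv ut vt ->]]; exists u, v.
by rewrite ruv !(in_cons x) ut vt !orbT.
Qed.

Lemma walk_edge_vertex x t f z : f \in walk_edges x t -> z \in f -> z \in x :: t.
Proof.
elim: t x => [|y t IH] x //=; rewrite inE in_cons => /predU1P[-> | /IH zt /zt ->].
  by rewrite !inE => /orP[] ->; rewrite ?orbT.
by rewrite orbT.
Qed.

Lemma uniq_walk_edges x t : uniq (x :: t) -> uniq (walk_edges x t).
Proof.
elim: t x => [|y t IH] x //= /andP[xt uyt]; rewrite IH // andbT.
by apply: contra xt => /walk_edge_vertex; apply; rewrite !inE eqxx.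
Qed.

Lemma uniq_closed_cycle_edges x p :
  uniq (x :: p) -> 2 < size (x :: p) -> uniq (walk_edges x (rcons p x)).
Proof.
case: p => [|y p] //= /andP[xyp uyp] p1.
have xE (f : {set T}) : x \in f -> f \notin walk_edges y p.
  by move=> xf; apply: contra xyp => /walk_edge_vertex; apply.
have yl : y != last y p.
  case: p {xyp xE} p1 uyp => [|z p] //= _ /andP[yp _].
  by apply: contraNneq yp => ->; exact: mem_last.
rewrite -cats1 walk_edges_cat /= cat_uniq /= uniq_walk_edges // mem_cat inE orbF negb_or.
rewrite (xE _ (set21 x y)) (xE _ (set22 (last y p) x)) !andbT /=.
apply/eqP => /setP /(_ y); rewrite !inE eqxx orbT (negPf yl) /= => /esym /eqP yx.
by move: xyp; rewrite -yx mem_head.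
Qed.

Lemma card_walk_vertices x t : #|[set:: x :: t]| <= #|[set:: walk_edges x t]|.+1.
Proof.
elim: t x => [|y t IH] x /=; first by rewrite set_seq1 set_nil cards1 cards0.
rewrite (set_cons x) (set_cons [set x; y]) !cardsU1.
case: (boolP (x \in [set:: y :: t])) => xV /=.
  by rewrite add0n (leq_trans (IH y)) // ltnS leq_addl.
have -> : [set x; y] \notin [set:: walk_edges y t].
  by apply: contra xV; rewrite !inE => /walk_edge_vertex; apply; rewrite !inE eqxx.
exact: IH.
Qed.

Lemma walk_connect x t F : {subset walk_edges x t <= F} ->
  forall z, z \in x :: t -> connect (edge_rel F) x z.
Proof.
elim: t x => [|y t IH] x sub z /=; first by rewrite inE => /eqP ->.
rewrite in_cons => /predU1P[-> //|zt].
apply: (@connect_trans _ _ y); first by apply: connect1; apply: sub; exact: mem_head.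
by apply: IH => [f ft|]; [apply: sub; rewrite inE ft orbT | exact: zt].
Qed.

Lemma closed_cycle_vertices x p : [set:: x :: rcons p x] = [set:: x :: p].
Proof. by apply/setP => z; rewrite !inE mem_rcons inE orbA orbb. Qed.

End Walks.

Section ClosedWalks.
Variables (T : finType) (r : rel T).
Hypothesis rsym : symmetric r.

Lemma closed_walk_detour x t u v : path r x t -> last x t = x -> u \in x :: t -> r u v ->
  exists t', [/\ path r x t', last x t' = x, size t' = (size t).+2 &
                 [set:: x :: t'] = v |: [set:: x :: t]].
Proof.
move=> pt lt; rewrite in_cons => /predU1P[-> ruv|ut ruv].
  exists (v :: x :: t); split => //=; first by rewrite ruv rsym ruv.
  by apply/setP => z; rewrite !inE; case: (z == v); case: (z == x); case: (z \in t).
move: pt lt; case/splitPr: ut => t1 t2 pt lt.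
exists (t1 ++ u :: v :: u :: t2); split.
- by move: pt; rewrite !cat_path /= (rsym v u) ruv => /andP[-> /andP[-> ->]].
- by move: lt; rewrite !last_cat.
- by rewrite !size_cat /= !addnS.
- apply/setP => z; rewrite !inE !mem_cat !inE.
  by case: (z == x); case: (z \in t1); case: (z == u); case: (z == v).
Qed.

Section Growth.
Variables (A : {set T}) (x : T).
Hypothesis connA : forall y, y \in A -> connect r x y.

Lemma closed_walk_grow d t : path r x t -> last x t = x -> #|[set:: x :: t]| + d <= #|A| ->
  exists t', [/\ path r x t', last x t' = x, size t' = size t + 2 * d &
                 #|[set:: x :: t']| = #|[set:: x :: t]| + d].
Proof.
move=> pt lt; elim: d => [|d IH] hd; first by exists t; rewrite !addn0.
have [|t' [pt' lt' st' ct']] := IH; first by apply: leq_trans hd; rewrite addnS.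
have [y yA yV] : exists2 y, y \in A & y \notin [set:: x :: t'].
  by apply/subsetPn; apply: contraTN hd => /subset_leq_card; rewrite ct'; lia.
have xV : x \in [set:: x :: t'] by rewrite inE mem_head.
have [u [v [uV vV ruv]]] := connect_exit (connA yA) xV yV.
rewrite inE in uV.
have [t'' [pt'' lt'' st'' Vt'']] := closed_walk_detour pt' lt' uV ruv.
by exists t''; rewrite Vt'' cardsU1 vV ct' st''; split => //; lia.
Qed.

Lemma spanning_closed_walk : (forall u v, r u v -> v \in A) -> x \in A ->
  exists t, [/\ path r x t, last x t = x, size t = 2 * #|A|.-1 & [set:: x :: t] = A].
Proof.
move=> rA xA; have A0 : 0 < #|A| by apply/card_gt0P; exists x.
have [|t [pt lt st cV]] := @closed_walk_grow #|A|.-1 [::] isT erefl.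
  by rewrite set_seq1 cards1 add1n prednK.
exists t; split => //; apply/eqP; rewrite eqEcard cV set_seq1 cards1 add1n prednK // leqnn andbT.
apply/subsetP => z; rewrite inE in_cons => /predU1P[-> //|].
by apply/allP; apply: path_targets_all pt.
Qed.

End Growth.
End ClosedWalks.

Section Graph.
Variables (T : finType) (e : rel T).
Hypotheses (esym : symmetric e) (eirr : irreflexive e).
Implicit Types (S : {set T}) (F : {set {set T}}).

Definition simple_cycle (c : seq T) := [&& uniq c, 2 < size c & cycle e c].

Definition cycles_longer n := forall c, simple_cycle c -> n < size c.

Lemma path_avoid_edge f x t : path e x t -> f \notin walk_edges x t ->
  path (fun a b => e a b && ([set a; b] != f)) x t.
Proof.
elim: t x => [|y t IH] x //= /andP[exy pt]; rewrite inE negb_or => /andP[fxy ft].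
by rewrite exy eq_sym fxy IH.
Qed.

Lemma avoiding_path_cycle u v c : e u v -> uniq (v :: c) -> last v c = u ->
  path (fun a b => e a b && ([set a; b] != [set u; v])) v c -> simple_cycle (v :: c).
Proof.
move=> euv uc lc pc.
have uv : u != v by apply: contraTneq euv => ->; rewrite eirr.
rewrite /simple_cycle uc /= rcons_path lc euv (sub_path _ pc) => [|a b /andP[] //].
case: c {uc} lc pc => [|w [|w' c]] //= => [lc | lc /andP[/andP[_ nf] _]].
  by move: uv; rewrite lc eqxx.
by move: nf; rewrite lc setUC eqxx.
Qed.

Lemma single_edge_cycle x t f : path e x t -> last x t = x ->
  count_mem f (walk_edges x t) = 1 -> ~ cycles_longer (size t).
Proof.
move=> pt lt cnt long.
have /walk_edgesP [t1 [v [t2 [dt df]]]] : f \in walk_edges x t.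
  by rewrite -has_pred1 has_count cnt.
move: cnt pt lt; rewrite dt walk_edges_cat count_cat cat_path last_cat /= -df eqxx.
move=> cnt /andP[p1 /andP[euv p2]] lt2.
move: cnt; rewrite add1n addnS => -[/eqP]; rewrite addn_eq0 => /andP[/eqP c1 /eqP c2].
have pr : path (fun a b => e a b && ([set a; b] != f)) v (t2 ++ t1).
  apply: path_avoid_edge; first by rewrite cat_path p2 lt2 p1.
  by rewrite walk_edges_cat lt2 mem_cat negb_or; apply/andP; split; apply/count_memPn.
have : last v (t2 ++ t1) = last x t1 by rewrite last_cat lt2.
case/shortenP: pr => c pc uc sub lc; rewrite df in pc.
have := long _ (avoiding_path_cycle euv uc lc pc).
apply/negP; rewrite -leqNgt dt size_cat /= addnS addnC -size_cat.
apply: (@uniq_leq_size _ _ (v :: t2 ++ t1) uc) => z.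
by rewrite !in_cons => /predU1P[-> | /sub ->]; rewrite ?eqxx ?orbT.
Qed.

Lemma closed_walk_edges_twice x t f : path e x t -> last x t = x ->
  cycles_longer (size t) -> f \in walk_edges x t -> 1 < count_mem f (walk_edges x t).
Proof.
move=> pt lt long ft; have := single_edge_cycle pt lt (f := f).
have : 0 < count_mem f (walk_edges x t) by rewrite -has_count has_pred1.
by case: (count_mem f _) => [|[|n]] // _ /(_ erefl).
Qed.

Lemma double_closed_walk_edges x t : path e x t -> last x t = x ->
  cycles_longer (size t) -> 2 * #|[set:: walk_edges x t]| <= size t.
Proof.
move=> pt lt long; rewrite -[leqRHS](size_walk_edges x t).
by apply: double_card_le_size => f; exact: closed_walk_edges_twice.
Qed.

Lemma set2_edge u v u' v' : [set u; v] = [set u'; v'] -> e u' v' -> e u v.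
Proof.
move=> E euv'.
have uv' : u' != v' by apply: contraTneq euv' => ->; rewrite eirr.
have uv : u != v by move: (cards2 u v); rewrite E cards2 uv'; case: (u != v).
have := set21 u v; have := set22 u v; rewrite E !inE.
by case/orP => /eqP vE; case/orP => /eqP uE; move: uv; rewrite vE uE ?eqxx // => _; rewrite esym.
Qed.

Lemma closed_walk_lenP S m :
  reflect (exists x t, [/\ size t = m, path e x t, last x t = x & S \subset [set:: x :: t]])
          (closed_walk_len e S m).
Proof.
apply: (iffP existsP) => [[x /existsP [t /and3P[pt /eqP lt St]]] | [x [t [<- pt lt St]]]].
  exists x, t; split; rewrite ?size_tuple //.
  by apply/subsetP => y /(subsetP St); rewrite inE.
exists x; apply/existsP; exists (in_tuple t); rewrite /= pt lt eqxx /=.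
by apply/subsetP => y /(subsetP St); rewrite inE.
Qed.

Lemma tsp_le_closed_walk S x t : path e x t -> last x t = x -> S \subset [set:: x :: t] ->
  tsp e S <= size t.
Proof. by move=> pt lt SV; apply: least_nat_le; apply/closed_walk_lenP; exists x, t. Qed.

Lemma walk_connected_subgraph S x t : path e x t -> S \subset [set:: x :: t] ->
  connected_subgraph_size e S #|[set:: walk_edges x t]|.
Proof.
move=> pt SV; apply/existsP; exists [set:: x :: t]; apply/existsP; exists [set:: walk_edges x t].
rewrite eqxx SV /=; apply/andP; split.
  apply/forall_inP => f; rewrite inE => /(walk_edge_rel pt) [u [v [euv ut vt ->]]].
  by apply/existsP; exists u; apply/existsP; exists v; rewrite euv !in_set ut vt eqxx.
have Ex : forall z, z \in [set:: x :: t] -> connect (edge_rel [set:: walk_edges x t]) x z.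
  by move=> z; rewrite inE; apply: walk_connect => f; rewrite inE.
apply/forall_inP => a /Ex xa; apply/forall_inP => b /Ex xb.
apply: connect_trans xb; rewrite (sym_connect_sym (edge_rel_sym _)) in xa; exact: xa.
Qed.

Lemma connected_subgraph_witness S m : connected_subgraph_size e S m ->
  exists (A : {set T}) F, [/\ #|F| = m, S \subset A,
    forall u v, edge_rel F u v -> e u v /\ v \in A &
    {in A &, forall a b, connect (edge_rel F) a b}].
Proof.
case/existsP => A /existsP [F /and4P[/eqP cF /forall_inP hF SA /forall_inP hA]].
exists A, F; split => // [u v uvF | a b aA /(forall_inP (hA a aA))] //.
have /existsP [u' /existsP [v' /and4P[e' u'A v'A /eqP E]]] := hF _ uvF.
split; first exact: set2_edge E e'.
by have := set22 u v; rewrite E !inE => /orP[] /eqP ->.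
Qed.

Lemma connected_subgraph_closed_walk S m x : connected_subgraph_size e S m -> x \in S ->
  exists t, [/\ path e x t, last x t = x, S \subset [set:: x :: t],
                size t = 2 * #|[set:: x :: t]|.-1 & #|[set:: x :: t]| <= m.+1].
Proof.
move=> /connected_subgraph_witness [A [F [cF SA FeA Fconn]]] xS.
have xA : x \in A := subsetP SA x xS.
have [t [pt lt st VA]] := spanning_closed_walk (@edge_rel_sym _ F)
  (fun y yA => Fconn x y xA yA) (fun u v uvF => (FeA u v uvF).2) xA.
exists t; rewrite VA; split => //; first by apply: sub_path pt => u v /FeA [].
rewrite -cF -VA; apply: leq_trans (card_walk_vertices x t) _; rewrite ltnS.
apply: subset_leq_card; apply/subsetP => f; rewrite inE.
by case/(walk_edge_rel pt) => u [v [uvF _ _ ->]].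
Qed.

(* Closed up by a simple F-path, the segment becomes a closed walk shorter than
   every cycle; its distinct edges, each traversed twice there, must recur on
   the F-path. *)
Lemma segment_edges_in F y s : (forall u v, edge_rel F u v -> e u v) ->
  path e y s -> uniq (walk_edges y s) -> connect (edge_rel F) (last y s) y ->
  cycles_longer (size s + #|F|) -> {subset walk_edges y s <= F}.
Proof.
move=> Fe ps us /connectP [q pq lq] long f fs; move: lq.
case/shortenP: pq => q' pq' uq' _ lq'.
have Fq' : {subset walk_edges (last y s) q' <= F}.
  by move=> f' /(walk_edge_rel pq') [u [v [uvF _ _ ->]]].
have q'F : size q' <= #|F|.
  rewrite -(size_walk_edges (last y s)) -(card_uniqP (uniq_walk_edges uq')).
  by apply: subset_leq_card; apply/subsetP => f'; exact: Fq'.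
have pw : path e y (s ++ q') by rewrite cat_path ps (sub_path Fe pq').
have lw : last y (s ++ q') = y by rewrite last_cat.
have longw : cycles_longer (size (s ++ q')).
  by move=> c /long; apply: leq_ltn_trans; rewrite size_cat leq_add2l.
have := closed_walk_edges_twice pw lw longw (f := f).
rewrite walk_edges_cat mem_cat fs count_cat (count_uniq_mem _ us) fs => /(_ isT) twice.
by apply: Fq'; rewrite -has_pred1 has_count; lia.
Qed.

Lemma shortest_cycle : ~ acyclic_graph e ->
  exists x p, simple_cycle (x :: p) /\ forall c, simple_cycle c -> size (x :: p) <= size c.
Proof.
move=> cyclic.
have [[c cyc]|//] := excluded_middle_informative (exists c, simple_cycle c).
pose P n := [exists c : n.-tuple T, simple_cycle c].
have exP : exists n, P n by exists (size c); apply/existsP; exists (in_tuple c).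
case: (ex_minnP exP) => g /existsP [[c' szc] cyc'] gmin.
case: c' szc cyc' => [|x p] szc cyc'; first by case/and3P: cyc'.
exists x, p; split => // c' cyc''; rewrite (eqP szc); apply: gmin.
by apply/existsP; exists (in_tuple c').
Qed.

Lemma quartered_walk_subgraph_card F (A : {set T}) x t a s b s' :
  path e x t -> last x t = x -> uniq (walk_edges x t) ->
  (forall c, simple_cycle c -> size t <= size c) ->
  t = a :: s ++ b :: s' -> 2 < size t -> 2 * size s < size t -> 2 * size s' < size t ->
  (forall u v, edge_rel F u v -> e u v) -> {in A &, forall u v, connect (edge_rel F) u v} ->
  {subset [:: x; a; last a s; b] <= A} -> size t < 2 * #|F|.
Proof.
move=> pt lt ut shortest dt t3 ss ss' Fe Fconn inA; rewrite ltnNge; apply/negP => Fg.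
have seg y s0 : path e y s0 -> uniq (walk_edges y s0) -> y \in [:: x; a; last a s; b] ->
    last y s0 \in [:: x; a; last a s; b] -> 2 * size s0 < size t -> {subset walk_edges y s0 <= F}.
  move=> ps us yS lS ss0; apply: (segment_edges_in Fe ps us).
    exact: Fconn (inA _ lS) (inA _ yS).
  by move=> c /shortest; apply: leq_trans; lia.
have tF : {subset walk_edges x t <= F}.
  have lb : last b s' = x by rewrite -lt dt /= last_cat.
  move: pt ut; rewrite dt /= walk_edges_cat cat_path /= cat_uniq.
  move=> /and4P[exa pas elb pbs'] /andP[_ /and3P[us _ /andP[_ us']]] f.
  rewrite inE mem_cat inE => /predU1P[->|/orP[fs|/predU1P[->|fs']]].
  - by apply: (seg x [:: a]); rewrite /= ?exa ?inE ?eqxx ?orbT //; lia.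
  - by apply: (seg a s); rewrite ?inE ?eqxx ?orbT.
  - by apply: (seg (last a s) [:: b]); rewrite /= ?elb ?inE ?eqxx ?orbT //; lia.
  - by apply: (seg b s'); rewrite ?lb ?inE ?eqxx ?orbT.
have : size t <= #|F|.
  rewrite -(size_walk_edges x) -(card_uniqP ut).
  by apply: subset_leq_card; apply/subsetP.
lia.
Qed.

Section Connected.
Hypothesis hconn : connected_graph e.

Lemma full_closed_walk x : exists t, [/\ path e x t, last x t = x & [set:: x :: t] = setT].
Proof.
have [t [pt lt _ VT]] := spanning_closed_walk esym (fun y _ => hconn x y)
  (fun _ _ _ => in_setT _) (in_setT x).
by exists t.
Qed.

Lemma tsp_exists S (x : T) : exists m, closed_walk_len e S m.
Proof.
have [t [pt lt VT]] := full_closed_walk x.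
by exists (size t); apply/closed_walk_lenP; exists x, t; rewrite VT subsetT.
Qed.

Lemma steiner_exists S (x : T) : exists m, connected_subgraph_size e S m.
Proof.
have [t [pt lt VT]] := full_closed_walk x.
by exists #|[set:: walk_edges x t]|; apply: walk_connected_subgraph pt _; rewrite VT subsetT.
Qed.

Lemma steiner_closed_walk S (x : T) : x \in S ->
  exists t, [/\ path e x t, last x t = x, S \subset [set:: x :: t],
                size t <= 2 * steiner e S & #|S| <= (steiner e S).+1].
Proof.
move=> xS; have := least_natP (steiner_exists S x).
case/connected_subgraph_closed_walk/(_ xS) => t [pt lt SV st cV].
exists t; split => //.
  rewrite st leq_mul2l /= -ltnS prednK //; apply/card_gt0P; exists x.
  by rewrite inE mem_head.
exact: leq_trans (subset_leq_card SV) cV.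
Qed.

Lemma tsp_le_double_steiner S x : x \in S -> tsp e S <= 2 * steiner e S.
Proof.
case/steiner_closed_walk => t [pt lt SV st _].
exact: leq_trans (tsp_le_closed_walk pt lt SV) st.
Qed.

Lemma double_steiner_le_tsp S (x : T) : acyclic_graph e -> 2 * steiner e S <= tsp e S.
Proof.
move=> acyc; have /closed_walk_lenP [y [t [st pt lt SV]]] := least_natP (tsp_exists S x).
rewrite /tsp -st.
have long : cycles_longer (size t) by move=> c cyc; case: acyc; exists c.
apply: leq_trans _ (double_closed_walk_edges pt lt long).
by rewrite leq_mul2l /=; apply: least_nat_le; exact: walk_connected_subgraph.
Qed.

Lemma tsp_lt_double_steiner_small_girth x p k :
  simple_cycle (x :: p) -> size (x :: p) <= k <= #|T| ->
  exists S, #|S| = k /\ tsp e S < 2 * steiner e S.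
Proof.
case/and3P=> up g3 cp /andP[gk kT].
have Vc : #|[set:: x :: rcons p x]| = size (x :: p).
  by rewrite closed_cycle_vertices cardsE; apply/card_uniqP.
have [|t [pt lt st cV]] := closed_walk_grow esym (A := setT) (x := x)
  (fun y _ => hconn x y) (d := k - size (x :: p)) cp (last_rcons _ _ _).
  by rewrite Vc cardsT; lia.
exists [set:: x :: t]; split; first by rewrite cV Vc; lia.
have [|_ [_ _ _ _ cS]] := @steiner_closed_walk [set:: x :: t] x; first by rewrite inE mem_head.
have := tsp_le_closed_walk pt lt (subxx _).
move: cS g3 gk; rewrite cV Vc st size_rcons /=; lia.
Qed.

Lemma tsp_lt_double_steiner_large_girth x p k : simple_cycle (x :: p) ->
  (forall c, simple_cycle c -> size (x :: p) <= size c) -> 4 <= k < size (x :: p) ->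
  exists S, #|S| = k /\ tsp e S < 2 * steiner e S.
Proof.
move=> cyc shortest /andP[k4 kg]; have /and3P[up g3 cp] := cyc.
have [|a [s [b [s' [dt ss ss']]]]] := @split_short_halves _ (rcons p x).
  by move: k4 kg; rewrite size_rcons /=; lia.
pose Q := [set:: [:: x; a; last a s; b]].
have QC : Q \subset [set:: x :: p].
  rewrite -closed_cycle_vertices dt; apply/subsetP => z; rewrite !inE.
  case/or4P => /eqP ->; rewrite ?eqxx ?orbT //.
    by have := mem_last a s; rewrite in_cons mem_cat => /orP[->|->]; rewrite ?orbT.
  by rewrite mem_cat mem_head !orbT.
have [|S [QS SC cS]] := @subset_card_between _ _ _ k QC.
  by rewrite !cardsE (card_uniqP up) (ltnW kg) andbT (leq_trans (card_size _)).
exists S; split => //.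
apply: leq_ltn_trans (tsp_le_closed_walk cp (last_rcons _ _ _) _) _.
  by rewrite closed_cycle_vertices.
rewrite /steiner.
have [A [F [<- SA FeA Fconn]]] := connected_subgraph_witness (least_natP (steiner_exists S x)).
apply: (quartered_walk_subgraph_card cp (last_rcons _ _ _) (uniq_closed_cycle_edges up g3)
          _ dt _ ss ss' _ Fconn).
- by move=> c /shortest; rewrite size_rcons.
- by rewrite size_rcons.
- by move=> u v /FeA [].
- by move=> z zQ; apply/(subsetP SA)/(subsetP QS); rewrite inE.
Qed.

Lemma exists_tsp_lt_double_steiner k : 4 <= k -> k <= #|T| -> ~ acyclic_graph e ->
  exists S, #|S| = k /\ tsp e S < 2 * steiner e S.
Proof.
move=> k4 kT /shortest_cycle [x [p [cyc shortest]]].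
case: (leqP (size (x :: p)) k) => [gk | kg].
  by apply: tsp_lt_double_steiner_small_girth cyc _; rewrite gk kT.
by apply: tsp_lt_double_steiner_large_girth cyc shortest _; rewrite k4 kg.
Qed.

End Connected.
End Graph.

Theorem proposition2 (k : nat) (hk : 4 <= k) :
  (forall (T : finType) (e : rel T),
      simple_graph e -> is_tree e -> k <= #|T| ->
      W_tsp e k = 2 * W_steiner e k) /\
  (forall (T : finType) (e : rel T),
      simple_graph e -> connected_graph e -> ~ is_tree e -> k <= #|T| ->
      W_tsp e k < 2 * W_steiner e k).
Proof.
have nonempty (T : finType) (S : {set T}) : #|S| = k -> exists x, x \in S.
  by move=> cS; apply/card_gt0P; rewrite cS; exact: leq_trans hk.
split=> T e [esym eirr].
  move=> [conn acyc] _; rewrite /W_tsp /W_steiner big_distrr /=.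
  apply: eq_bigr => S /eqP /nonempty [x xS]; apply/eqP; rewrite eqn_leq.
  rewrite (tsp_le_double_steiner esym eirr conn xS).
  exact: double_steiner_le_tsp esym eirr conn S x acyc.
move=> conn not_tree kT.
have [|S [cS lt]] := exists_tsp_lt_double_steiner esym eirr conn hk kT.
  by move=> acyc; apply: not_tree.
rewrite /W_tsp /W_steiner big_distrr /= (bigD1 S) ?cS //= [X in _ < X](bigD1 S) ?cS //=.
rewrite -addSn leq_add // leq_sum // => S' /andP[/eqP /nonempty [x xS'] _].
exact (tsp_le_double_steiner esym eirr conn xS').
Qed.
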